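(* If $\mathrm{char}(\Bbbk)=0$ or $\mathrm{char}(\Bbbk)\ge5$, then $F=\{f_1,f_2,f_3,f_4\}$, where $f_1=3y^3-4xyz+x^4-3y^3z^5-2xy^6z^2-x^2y^4z^3$, $f_2=2y^2z-3xz^2+x^3y-2y^7z^2-xy^5z^3$, $f_3=yz^2-3x^2y^2+2x^3z-y^6z^3-2xy^4z^4$, $f_4=z^3-2xy^3+x^2yz-y^5z^4$, is a standard basis of $P$ with respect to the negative degree reverse lexicographic order $>_{\rm ds}$.
   Context: $\Bbbk$ is a field, $\rho:\Bbbk[[x,y,z]]\to\Bbbk[[t]]$ is the $\Bbbk$-algebra morphism with $\rho(x)=t^6+t^{31}$, $\rho(y)=t^8$, $\rho(z)=t^{10}$, and $P=\ker\rho$. The order $>_{\rm ds}$ on monomials $x^\alpha=x^{\alpha_1}y^{\alpha_2}z^{\alpha_3}$: $x^\alpha>_{\rm ds}x^\beta$ iff $|\alpha|<|\beta|$, or $|\alpha|=|\beta|$ and there is $i\in\{1,2\}$ with $\alpha_3=\beta_3,\ldots,\alpha_{i+1}=\beta_{i+1}$ and $\alpha_i<\beta_i$ (so $1>x>y>z>x^2>xy>y^2>xz>yz>z^2>\cdots$). For $0\ne f\in\Bbbk[[x,y,z]]$, the leading monomial $\mathrm{LM}(f)$ is the $>_{\rm ds}$-largest monomial in the support of $f$. A finite set $G\subseteq I$ is a standard basis of an ideal $I\subseteq\Bbbk[[x,y,z]]$ if the ideal generated by $\{\mathrm{LM}(g):g\in G,g\neq0\}$ equals the ideal generated by $\{\mathrm{LM}(f):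 f\in I, f\ne0\}$. *)

From mathcomp Require Import all_boot all_algebra.
From Stdlib Require List.
Set Implicit Arguments. Unset Strict Implicit. Unset Printing Implicit Defensive.
Import GRing.Theory.
Local Open Scope ring_scope.

(* Exponent vectors (a1,a2,a3) of monomials x^a1 y^a2 z^a3. *)
Definition mon := (nat * nat * nat)%type.
Definition mdeg (a : mon) : nat := (a.1.1 + a.1.2 + a.2)%N.

Definition ds_gt (a b : mon) : Prop :=
  (mdeg a < mdeg b)%N \/
  (mdeg a = mdeg b /\
    ( (a.2 < b.2)%N
    \/ (a.2 = b.2 /\ (a.1.2 < b.1.2)%N)
    \/ (a.2 = b.2 /\ a.1.2 = b.1.2 /\ (a.1.1 < b.1.1)%N))).

Section PowerSeries.
Variable K : fieldType.

(* Formal power series in K[[x,y,z]], given by their coefficient function. *)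
Definition ps := mon -> K.

Definition psmul (f g : ps) : ps := fun a =>
  \sum_(i < a.1.1.+1) \sum_(j < a.1.2.+1) \sum_(k < a.2.+1)
     f (nat_of_ord i, nat_of_ord j, nat_of_ord k) *
     g ((a.1.1 - i)%N, (a.1.2 - j)%N, (a.2 - k)%N).

Definition monomial (a : mon) : ps := fun b => (b == a)%:R.

Definition ideal_gen (S : ps -> Prop) (f : ps) : Prop :=
  exists s : seq (ps * ps),
    (forall p, List.In p s -> S p.1) /\
    forall a, f a = \sum_(p <- s) psmul p.1 p.2 a.

Definition is_LM (f : ps) (a : mon) : Prop :=
  f a != 0 /\ forall b, f b != 0 -> b <> a -> ds_gt a b.

Definition LMset (S : ps -> Prop) (m : ps) : Prop :=
  exists f a, S f /\ (exists b, f b != 0) /\ is_LM f a /\ m = monomial a.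

Definition standard_basis (G I : ps -> Prop) : Prop :=
  (forall g, G g -> I g) /\
  (forall h, ideal_gen (LMset G) h <-> ideal_gen (LMset I) h).

Definition ser := nat -> K.
Definition smul (s u : ser) : ser := fun n => \sum_(i < n.+1) s i * u (n - i)%N.
Definition sone : ser := fun n => (n == 0%N)%:R.
Definition spow (s : ser) (m : nat) : ser := iter m (smul s) sone.

Definition tX : ser := fun n => (n == 6%N)%:R + (n == 31%N)%:R.
Definition tY : ser := fun n => (n == 8%N)%:R.
Definition tZ : ser := fun n => (n == 10%N)%:R.

(* rho(f) = f(t^6+t^31, t^8, t^10); since tX, tY, tZ have order >= 1,
   only monomials with all exponents <= n contribute to the coefficient of t^n. *)
Definition rho (f : ps) : ser := fun n =>
  \sum_(i < n.+1) \sum_(j < n.+1) \sum_(k < n.+1)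
    f (nat_of_ord i, nat_of_ord j, nat_of_ord k) *
    smul (spow tX i) (smul (spow tY j) (spow tZ k)) n.

Definition kerP (f : ps) : Prop := forall n, rho f n = 0.

Definition poly_of (s : seq (mon * int)) : ps := fun a =>
  \sum_(p <- s | p.1 == a) (p.2)%:~R.

Definition f1 : ps := poly_of
  [:: ((0,3,0)%N, 3%:Z); ((1,1,1)%N, - 4%:Z); ((4,0,0)%N, 1%:Z);
      ((0,3,5)%N, - 3%:Z); ((1,6,2)%N, - 2%:Z); ((2,4,3)%N, - 1%:Z)].
Definition f2 : ps := poly_of
  [:: ((0,2,1)%N, 2%:Z); ((1,0,2)%N, - 3%:Z); ((3,1,0)%N, 1%:Z);
      ((0,7,2)%N, - 2%:Z); ((1,5,3)%N, - 1%:Z)].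
Definition f3 : ps := poly_of
  [:: ((0,1,2)%N, 1%:Z); ((2,2,0)%N, - 3%:Z); ((3,0,1)%N, 2%:Z);
      ((0,6,3)%N, - 1%:Z); ((1,4,4)%N, - 2%:Z)].
Definition f4 : ps := poly_of
  [:: ((0,0,3)%N, 1%:Z); ((1,3,0)%N, - 2%:Z); ((2,1,1)%N, 1%:Z);
      ((0,5,4)%N, - 1%:Z)].

End PowerSeries.

From mathcomp Require Import all_boot all_algebra.
From Stdlib Require List.
From mathcomp Require Import zify ring.
Set Implicit Arguments. Unset Strict Implicit. Unset Printing Implicit Defensive.
Import GRing.Theory.
Local Open Scope ring_scope.

(* Each f_i lies in P: the coefficients of rho(f_i) cancel, which is checked by computation.
   Their leading monomials are y^3, y^2 z, y z^2, z^3, which generate (y, z)^3.  Conversely,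
   let f in P have leading monomial x^a y^b z^c with b + c < 3.  Since
   rho(x^e) = t^(6 e1 + 8 e2 + 10 e3) (1 + t^25)^e1 and >_ds favours low degree, only
   x^a y^b z^c and at most one partner monomial of the same weight contribute to the
   coefficients of t^w and t^(w + 25) of rho(f), w = 6a + 8b + 10c.  The two resulting
   linear equations force the coefficient of x^a y^b z^c to vanish as soon as 2 and 3 are
   invertible in K.  Hence every leading monomial of P lies in (y, z)^3. *)

(* rho (x^e) = t^(wt e) (1 + t^25)^(e.1.1) *)
Definition wt (a : mon) : nat := 6 * a.1.1 + 8 * a.1.2 + 10 * a.2.

Definition mon_add (a b : mon) : mon := (a.1.1 + b.1.1, a.1.2 + b.1.2, a.2 + b.2)%N.

(* A computable [\sum_(p <- s | p.1 == k) p.2]: big operators do not reduce under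
   [vm_compute]. *)
Fixpoint keysum (T : eqType) (k : T) (s : seq (T * int)) : int :=
  if s is p :: s' then (if p.1 == k then p.2 else 0) + keysum k s' else 0.

Lemma keysumE (T : eqType) (k : T) s : keysum k s = \sum_(p <- s | p.1 == k) p.2.
Proof.
elim: s => [|p s IH]; first by rewrite big_nil.
by rewrite big_cons /= IH; case: eqP; rewrite ?add0r.
Qed.

Lemma keysum_notin (T : eqType) (k : T) s : k \notin map fst s -> keysum k s = 0.
Proof.
elim: s => [|p s IH] //=; rewrite inE negb_or => /andP[kp /IH ->].
by rewrite eq_sym (negbTE kp).
Qed.

Lemma big_uniq_support (T : eqType) (R : nmodType) (s L : seq T) (F : T -> R) :
  uniq s -> uniq L -> {subset L <= s} ->
  (forall x, x \in s -> F x != 0 -> x \in L) ->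
  \sum_(x <- s) F x = \sum_(x <- L) F x.
Proof.
move=> us uL sLs supp.
rewrite (bigID (mem L)) /= [X in _ + X]big1_seq ?addr0 => [|x /andP[xL xs]]; last first.
  by apply/eqP; apply: contraNT xL; apply: supp.
rewrite -big_filter; apply: perm_big; apply: uniq_perm => [||x]; rewrite ?filter_uniq //.
by rewrite mem_filter; apply/andP/idP => [[]|xL]; last split; rewrite //= sLs.
Qed.

Definition rho_terms (s : seq (mon * int)) : seq (nat * int) :=
  [seq ((wt p.1 + 25 * l)%N, p.2 * ('C(p.1.1.1, l) : int))
  | p <- s, l <- index_iota 0 p.1.1.1.+1].

Definition ds_gtb (a b : mon) : bool :=
  (mdeg a < mdeg b)%N || (mdeg a == mdeg b) &&
    [|| (a.2 < b.2)%N, (a.2 == b.2) && (a.1.2 < b.1.2)%N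
      | [&& a.2 == b.2, a.1.2 == b.1.2 & (a.1.1 < b.1.1)%N]].

Lemma ds_gtbP a b : ds_gtb a b -> ds_gt a b.
Proof. rewrite /ds_gtb /ds_gt /mdeg; lia. Qed.

Section RhoImage.
Variable K : fieldType.

Definition delta (a : nat) : ser K := fun n => (n == a)%:R.

Lemma sum_ord_delta N a (g : nat -> K) :
  \sum_(i < N) ((i : nat) == a)%:R * g i = (a < N)%N%:R * g a.
Proof.
case: (ltnP a N) => [aN|Na]; last first.
  rewrite mul0r big1 // => i _; case: eqP => [ia|]; last by rewrite mul0r.
  by have := ltn_ord i; lia.
rewrite (bigD1 (Ordinal aN)) //= eqxx big1 ?addr0 // => i ia.
by case: eqP => [iaE|]; rewrite ?mul0r //; case/eqP: ia; apply: val_inj.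
Qed.

Lemma natr_le_subn_eq (a b n : nat) :
  ((a <= n)%N%:R * ((n - a)%N == b)%:R : K) = (n == a + b)%N%:R.
Proof. by rewrite -natrM mulnb; congr (nat_of_bool _)%:R; apply/andP/eqP => [[]|]; lia. Qed.

Lemma smulC (s u : ser K) n : smul s u n = smul u s n.
Proof.
rewrite /smul (reindex_inj rev_ord_inj) /=; apply: eq_bigr => i _.
by rewrite subSS subKn 1?mulrC // -ltnS.
Qed.

Lemma smul_deltal (u : ser K) a n : smul (delta a) u n = (a <= n)%N%:R * u (n - a)%N.
Proof. by rewrite /smul /delta (sum_ord_delta _ _ (fun i => u (n - i)%N)) ltnS. Qed.

Lemma smul_deltar (s : ser K) a n : smul s (delta a) n = (a <= n)%N%:R * s (n - a)%N.
Proof. by rewrite smulC smul_deltal. Qed.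

Lemma eq_smul (s s' u u' : ser K) n :
  s =1 s' -> u =1 u' -> smul s u n = smul s' u' n.
Proof. by move=> ss' uu'; apply: eq_bigr => i _; rewrite ss' uu'. Qed.

Lemma spow_delta a j n : spow (delta a) j n = (n == a * j)%N%:R.
Proof.
elim: j n => [|j IH] n; first by rewrite muln0.
by rewrite /spow iterS -/(spow _ j) smul_deltal IH natr_le_subn_eq mulnS.
Qed.

Lemma spow_tX i n :
  spow (tX K) i n = \sum_(l < i.+1) 'C(i, l)%:R * (n == 6 * i + 25 * l)%N%:R.
Proof.
elim: i n => [|i IH] n; first by rewrite big_ord1 bin0 mul1r.
have tXE m : smul (tX K) (spow (tX K) i) m =
    smul (delta 6) (spow (tX K) i) m + smul (delta 31) (spow (tX K) i) m.
  by rewrite -big_split; apply: eq_bigr => j _; rewrite /tX mulrDl.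
rewrite /spow iterS -/(spow _ i) tXE !smul_deltal !IH !mulr_sumr.
under eq_bigr => l _ do rewrite mulrCA natr_le_subn_eq.
under [X in _ + X]eq_bigr => l _ do rewrite mulrCA natr_le_subn_eq.
rewrite [RHS]big_ord_recl.
under [X in _ = _ + X]eq_bigr => l _ do rewrite binS natrD mulrDl.
rewrite big_split /= [X in _ = _ + (X + _)]big_ord_recr /= (bin_small (ltnSn i)).
rewrite mul0r addr0 [X in X + _ = _]big_ord_recl addrA !bin0.
by congr (_ + _ + _); [|apply: eq_bigr => l _ ..];
  congr (_ * (_ == _)%:R); rewrite /= /bump /=; lia.
Qed.

Definition mon_image (e : mon) : ser K :=
  smul (spow (tX K) e.1.1) (smul (spow (tY K) e.1.2) (spow (tZ K) e.2)).

Lemma mon_imageE e n :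
  mon_image e n = \sum_(l < e.1.1.+1) 'C(e.1.1, l)%:R * (n == wt e + 25 * l)%N%:R.
Proof.
have tYZ : smul (spow (tY K) e.1.2) (spow (tZ K) e.2) =1 delta (8 * e.1.2 + 10 * e.2).
  move=> m; rewrite (@eq_smul _ (delta (8 * e.1.2)) _ (delta (10 * e.2))).
  - by rewrite smul_deltal natr_le_subn_eq.
  - by move=> k; rewrite (spow_delta 8).
  - by move=> k; rewrite (spow_delta 10).
rewrite /mon_image (eq_smul _ (fun=> erefl) tYZ) smul_deltar spow_tX mulr_sumr.
by apply: eq_bigr => l _; rewrite mulrCA natr_le_subn_eq /wt; congr (_ * (_ == _)%:R); lia.
Qed.

Lemma mon_image_wt e l : mon_image e (wt e + 25 * l)%N = 'C(e.1.1, l)%:R.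
Proof.
rewrite mon_imageE.
under eq_bigr => k _ do rewrite eqn_add2l eqn_mul2l /= eq_sym mulrC.
rewrite (sum_ord_delta _ _ (fun k => 'C(e.1.1, k)%:R)) ltnS.
by case: leqP => [_|lt_l]; rewrite ?mul1r // bin_small ?mulr0.
Qed.

Lemma mon_image_neq0 e n :
  mon_image e n != 0 -> exists2 l, (l <= e.1.1)%N & n = (wt e + 25 * l)%N.
Proof.
rewrite mon_imageE; case: (boolP [exists l : 'I_e.1.1.+1, n == wt e + 25 * l]%N).
  by case/existsP => l /eqP ->; exists l; rewrite // -ltnS.
rewrite negb_exists => /forallP none; rewrite big1 ?eqxx // => l _.
by rewrite (negbTE (none l)) mulr0.
Qed.

Lemma mon_image_eq0 e n : (n < wt e)%N -> mon_image e n = 0.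
Proof.
move=> lt_n; apply/eqP; apply: contraTT lt_n => /mon_image_neq0[l _ ->].
by rewrite -leqNgt leq_addr.
Qed.

Lemma sum3_monomial (e : mon) A B C (G : mon -> K) :
  \sum_(i < A.+1) \sum_(j < B.+1) \sum_(k < C.+1)
    monomial K e (nat_of_ord i, nat_of_ord j, nat_of_ord k) *
    G (nat_of_ord i, nat_of_ord j, nat_of_ord k)
  = if [&& e.1.1 <= A, e.1.2 <= B & e.2 <= C]%N then G e else 0.
Proof.
case: e => [[a b] c] /=.
have monE i j k : monomial K (a, b, c) (i, j, k) * G (i, j, k) =
    (i == a)%:R * ((j == b)%:R * ((k == c)%:R * G (i, j, k))).
  by rewrite /monomial !mulrA -!natrM !mulnb xpair_eqE -andbA.
under eq_bigr => i _ do under eq_bigr => j _ do under eq_bigr => k _ do rewrite monE.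
under eq_bigr => i _ do under eq_bigr => j _ do
  rewrite -!mulr_sumr (sum_ord_delta _ _ (fun k => G (i : nat, j : nat, k))).
under eq_bigr => i _ do
  rewrite -mulr_sumr (sum_ord_delta _ _ (fun j => (c < C.+1)%N%:R * G (i : nat, j, c))).
rewrite (sum_ord_delta _ _ (fun i => (b < B.+1)%N%:R * ((c < C.+1)%N%:R * G (i, b, c)))).
rewrite !ltnS.
by case: (a <= A)%N; case: (b <= B)%N; case: (c <= C)%N; rewrite /= ?(mul0r, mulr0, mul1r).
Qed.

Lemma rhoE (f : ps K) n : rho f n =
  \sum_(i < n.+1) \sum_(j < n.+1) \sum_(k < n.+1)
    f (nat_of_ord i, nat_of_ord j, nat_of_ord k) * mon_image (i : nat, j : nat, k : nat) n.
Proof. by []. Qed.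

Lemma rho_monomial e n : rho (monomial K e) n = mon_image e n.
Proof.
rewrite rhoE (sum3_monomial e n n n (mon_image^~ n)).
case: ifP => // /negbT out_e; rewrite mon_image_eq0 //.
by case: e out_e => [[a b] c]; rewrite /wt /=; lia.
Qed.

Lemma rho_support (f : ps K) n (L : seq mon) :
  uniq L -> {in L, forall e, wt e <= n}%N ->
  (forall e, f e * mon_image e n != 0 -> e \in L) ->
  rho f n = \sum_(e <- L) f e * mon_image e n.
Proof.
move=> uL wtL supp.
pose I := index_iota 0 n.+1.
pose box := [seq (p, k) | p <- [seq (i, j) | i <- I, j <- I], k <- I].
have -> : rho f n = \sum_(e <- box) f e * mon_image e n.
  rewrite big_allpairs big_allpairs big_mkord; apply: eq_bigr => i _.
  by rewrite big_mkord; apply: eq_bigr => j _; rewrite big_mkord.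
apply: big_uniq_support => // [|[[a b] c] eL|e _ /supp //].
  by rewrite !allpairs_uniq ?iota_uniq // => [] [? ?] [? ?] _ _ [-> ->].
have := wtL _ eL; rewrite /wt /= => wt_e.
by rewrite !(allpairs_f pair) // mem_index_iota; lia.
Qed.

Lemma psmul_monomial (e b : mon) (q : ps K) :
  psmul (monomial K e) q b =
  if [&& e.1.1 <= b.1.1, e.1.2 <= b.1.2 & e.2 <= b.2]%N
  then q (b.1.1 - e.1.1, b.1.2 - e.1.2, b.2 - e.2)%N else 0.
Proof.
exact: (sum3_monomial e _ _ _ (fun a => q (b.1.1 - a.1.1, b.1.2 - a.1.2, b.2 - a.2)%N)).
Qed.

Lemma psmul_monomialD (g e : mon) (q : ps K) :
  psmul (monomial K (mon_add g e)) q =1 psmul (monomial K g) (psmul (monomial K e) q).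
Proof.
move=> [[x1 x2] x3]; rewrite !psmul_monomial.
case: g e => [[g1 g2] g3] [[e1 e2] e3] /=.
case: ifP => le_ge; case: ifP => le_g; rewrite ?psmul_monomial /=; try case: ifP => le_e.
all: by [congr q; congr (_, _, _); lia | exfalso; lia | ].
Qed.

Lemma poly_ofE (s : seq (mon * int)) a : poly_of K s a = (keysum a s)%:~R.
Proof. by rewrite keysumE mulrz_sumr. Qed.

Lemma rho_poly_of (s : seq (mon * int)) n :
  rho (poly_of K s) n = \sum_(p <- s) p.2%:~R * mon_image p.1 n.
Proof.
have polyE a : poly_of K s a = \sum_(p <- s) p.2%:~R * monomial K p.1 a.
  rewrite /poly_of big_mkcond; apply: eq_bigr => p _.
  by rewrite /monomial eq_sym; case: eqP; rewrite ?mulr1 ?mulr0.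
rewrite rhoE.
under eq_bigr => i _ do under eq_bigr => j _ do under eq_bigr => k _ do
  rewrite polyE mulr_suml.
under eq_bigr => i _ do under eq_bigr => j _ do rewrite exchange_big.
under eq_bigr => i _ do rewrite exchange_big.
rewrite exchange_big; apply: eq_bigr => p _.
rewrite -rho_monomial rhoE !mulr_sumr; apply: eq_bigr => i _.
rewrite !mulr_sumr; apply: eq_bigr => j _; rewrite !mulr_sumr; apply: eq_bigr => k _.
by rewrite mulrA.
Qed.

Lemma rho_poly_ofE (s : seq (mon * int)) n :
  rho (poly_of K s) n = (keysum n (rho_terms s))%:~R.
Proof.
rewrite rho_poly_of keysumE mulrz_sumr [RHS]big_mkcond big_allpairs_dep.
apply: eq_bigr => p _; rewrite mon_imageE mulr_sumr big_mkord.
apply: eq_bigr => l _; rewrite eq_sym; case: eqP => _; last by rewrite !mulr0.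
by rewrite mulr1 intrM.
Qed.

Lemma kerP_poly_of (s : seq (mon * int)) :
  all (fun n => keysum n (rho_terms s) == 0) (map fst (rho_terms s)) ->
  kerP (poly_of K s).
Proof.
move=> zero n; rewrite rho_poly_ofE.
by case: (boolP (n \in map fst (rho_terms s))) => [/(allP zero)/eqP -> | /keysum_notin ->].
Qed.

Lemma is_LM_poly_of (s : seq (mon * int)) a : (keysum a s)%:~R != 0 :> K ->
  all (fun b => (b == a) || ds_gtb a b) (map fst s) -> is_LM (poly_of K s) a.
Proof.
move=> nz_a /allP lower; split; first by rewrite poly_ofE.
move=> b; rewrite poly_ofE => nz_b ne_ba.
have /lower/orP[/eqP // | /ds_gtbP //] : b \in map fst s.
by apply: contraNT nz_b => /keysum_notin ->; rewrite eqxx.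
Qed.

Lemma is_LM_max (f : ps K) a b : is_LM f a -> f b != 0 -> b = a \/ ds_gt a b.
Proof.
case=> _ max_a nz_b; have [->|ne_ba] := eqVneq b a; [by left | right].
by apply: max_a => //; apply/eqP.
Qed.

Lemma ker_one_term (f : ps K) e : kerP f ->
  (forall e', f e' * mon_image e' (wt e) != 0 -> e' = e) -> f e = 0.
Proof.
move=> Pf supp; rewrite -[RHS](Pf (wt e)) (@rho_support _ _ [:: e]) //.
- by rewrite big_seq1 -[wt e]addn0 -(muln0 25) mon_image_wt bin0 mulr1.
- by move=> e0; rewrite inE => /eqP ->.
- by move=> e0 /supp ->; rewrite inE.
Qed.

Lemma ker_two_terms (f : ps K) e e' m : kerP f -> e' != e -> wt e' = wt e ->
  e'.1.1 = (e.1.1 + m)%N ->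
  (forall d e'', (d < 2)%N ->
     f e'' * mon_image e'' (wt e + 25 * d) != 0 -> e'' \in [:: e; e']) ->
  m%:R * f e = 0.
Proof.
move=> Pf ne_e' wt_e' x_e' supp.
have rho_d d : (d < 2)%N -> f e * 'C(e.1.1, d)%:R + f e' * 'C(e.1.1 + m, d)%:R = 0.
  move=> lt_d2; rewrite -(Pf (wt e + 25 * d)%N) (@rho_support _ _ [:: e; e']).
  - by rewrite big_cons big_seq1 mon_image_wt -wt_e' mon_image_wt x_e'.
  - by rewrite /= inE eq_sym ne_e'.
  - by move=> e0; rewrite !inE => /orP[] /eqP ->; rewrite ?wt_e' leq_addr.
  - by move=> e0; apply: supp.
have := rho_d 1%N isT; have := rho_d 0%N isT; rewrite !bin0 !bin1 !mulr1 natrD => h0 h1.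
have -> : m%:R * f e = (e.1.1%:R + m%:R) * (f e + f e') -
    (f e * e.1.1%:R + f e' * (e.1.1%:R + m%:R)) by ring.
by rewrite h0 h1 mulr0 subr0.
Qed.

End RhoImage.

Definition cubic_mons : seq mon := [:: (0, 3, 0); (0, 2, 1); (0, 1, 2); (0, 0, 3)]%N.

Lemma cubic_mons_dvd a : (3 <= a.1.2 + a.2)%N ->
  exists2 g, g \in cubic_mons & exists e, a = mon_add g e.
Proof.
case: a => [[a1 a2] a3] /= cubic; exists (0, 3 - minn a3 3, minn a3 3)%N.
  by rewrite !inE !xpair_eqE; lia.
exists (a1, a2 - (3 - minn a3 3), a3 - minn a3 3)%N.
by rewrite /mon_add /=; congr (_, _, _); lia.
Qed.

Section StandardBasis.
Variable K : fieldType.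

Lemma ideal_gen_eq (S : ps K -> Prop) (h h' : ps K) :
  h' =1 h -> ideal_gen S h -> ideal_gen S h'.
Proof. by move=> hh' [s [Ss hE]]; exists s; split=> // a; rewrite hh'. Qed.

Lemma ideal_gen_generator (S : ps K -> Prop) g q : S g -> ideal_gen S (psmul g q).
Proof. by move=> Sg; exists [:: (g, q)]; split=> [p [<- | []] | a]; rewrite ?big_seq1. Qed.

Lemma ideal_gen_sub (S T : ps K -> Prop) h :
  (forall g q, S g -> ideal_gen T (psmul g q)) -> ideal_gen S h -> ideal_gen T h.
Proof.
move=> ST [s [Ss hE]]; elim: s h Ss hE => [|p s IH] h Ss hE.
  by exists [::]; split=> // a; rewrite hE !big_nil.
have [s1 [Ts1 E1]] := ST p.1 p.2 (Ss p (or_introl erefl)).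
have [s2 [Ts2 E2]] := IH _ (fun q sq => Ss q (or_intror sq)) (fun=> erefl).
exists (s1 ++ s2); split=> [q q_s | a]; last by rewrite hE big_cons big_cat /= E1 E2.
by case: (List.in_app_or _ _ _ q_s); [apply: Ts1 | apply: Ts2].
Qed.

Lemma ideal_gen_mono (S T : ps K -> Prop) h :
  (forall g, S g -> T g) -> ideal_gen S h -> ideal_gen T h.
Proof. by move=> ST; apply: ideal_gen_sub => g q /ST; apply: ideal_gen_generator. Qed.

Lemma LMset_mono (S T : ps K -> Prop) :
  (forall g, S g -> T g) -> forall m, LMset S m -> LMset T m.
Proof. by move=> ST m [f [a [/ST Tf LMf]]]; exists f, a. Qed.

Lemma natr_small_prime_neq0 p :
  [pchar K] =i pred0 \/ (exists q, q \in [pchar K] /\ (5 <= q)%N) ->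
  prime p -> (p < 5)%N -> p%:R != 0 :> K.
Proof.
move=> [char0 | [q [charq le5q]]] pr_p lt_p5; apply/negP => p0.
  by have := char0 p; rewrite inE /= pr_p p0.
have charp : p \in [pchar K] by rewrite inE /= pr_p p0.
by have := pcharf_eq charq p; rewrite charp => /esym; rewrite inE /= => /eqP; lia.
Qed.

Definition basisF (g : ps K) : Prop := g = f1 K \/ g = f2 K \/ g = f3 K \/ g = f4 K.

Lemma kerP_basisF g : basisF g -> kerP g.
Proof. by case=> [|[|[|]]] ->; apply: kerP_poly_of; vm_compute. Qed.

Section Characteristic.
Hypothesis nz2 : (2%:R : K) != 0.
Hypothesis nz3 : (3%:R : K) != 0.

Lemma LM_ker_cubic (f : ps K) e : kerP f -> is_LM f e -> (3 <= e.1.2 + e.2)%N.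
Proof.
move=> Pf LMe; have nz_e := LMe.1.
have supp n e' : f e' * mon_image K e' n != 0 ->
    e' = e \/ ds_gt e e' /\ exists2 l, (l <= e'.1.1)%N & n = (wt e' + 25 * l)%N.
  rewrite mulf_eq0 negb_or => /andP[nz_e' /mon_image_neq0 n_e'].
  by case: (is_LM_max LMe nz_e') => [|gt_e']; [left | right].
case: e {LMe} nz_e supp => [[a b] c] nz_e supp /=; rewrite leqNgt; apply/negP => small.
case: b c small nz_e supp => [|[|[|b]]] [|[|[|c]]] small nz_e supp; try lia.
1-2,4: move/eqP: nz_e; apply; apply: ker_one_term => // -[[i j] k] /supp[// | []];
  by rewrite /ds_gt /mdeg /wt /= => gt_e [l le_l wt_l]; exfalso; lia.
- suff /eqP : 2%:R * f (a, 0, 2)%N = 0 by rewrite mulf_eq0 (negbTE nz2) (negbTE nz_e).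
  apply: (ker_two_terms (e' := (a + 2, 1, 0)%N)) => //;
    [by rewrite xpair_eqE /= andbF | by rewrite /wt /=; lia |].
  move=> d [[i j] k] lt_d /supp[-> | []]; rewrite !inE ?eqxx //.
  by rewrite /ds_gt /mdeg /wt /= !xpair_eqE => gt_e [l le_l wt_l]; lia.
- suff /eqP : 3%:R * f (a, 1, 1)%N = 0 by rewrite mulf_eq0 (negbTE nz3) (negbTE nz_e).
  apply: (ker_two_terms (e' := (a + 3, 0, 0)%N)) => //;
    [by rewrite xpair_eqE /= andbF | by rewrite /wt /=; lia |].
  move=> d [[i j] k] lt_d /supp[-> | []]; rewrite !inE ?eqxx //.
  by rewrite /ds_gt /mdeg /wt /= !xpair_eqE => gt_e [l le_l wt_l]; lia.
- suff /eqP : 1%:R * f (a, 2, 0)%N = 0 by rewrite mulf_eq0 oner_eq0 (negbTE nz_e).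
  apply: (ker_two_terms (e' := (a + 1, 0, 1)%N)) => //;
    [by rewrite xpair_eqE /= andbF | by rewrite /wt /=; lia |].
  move=> d [[i j] k] lt_d /supp[-> | []]; rewrite !inE ?eqxx //.
  by rewrite /ds_gt /mdeg /wt /= !xpair_eqE => gt_e [l le_l wt_l]; lia.
Qed.

Lemma LMset_basisF g : g \in cubic_mons -> LMset basisF (monomial K g).
Proof.
have LM_F f e : basisF f -> is_LM f e -> LMset basisF (monomial K e).
  by move=> Ff LMe; exists f, e; split=> //; split=> //; exists e; case: LMe.
rewrite !inE => /or4P[] /eqP ->.
- apply: (LM_F (f1 K)); first by left.
  by apply: is_LM_poly_of; [exact: nz3 | vm_compute].
- apply: (LM_F (f2 K)); first by right; left.
  by apply: is_LM_poly_of; [exact: nz2 | vm_compute].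
- apply: (LM_F (f3 K)); first by do 2 right; left.
  by apply: is_LM_poly_of; [exact: oner_neq0 | vm_compute].
- apply: (LM_F (f4 K)); first by do 3 right.
  by apply: is_LM_poly_of; [exact: oner_neq0 | vm_compute].
Qed.

Lemma ideal_LM_ker_sub h : ideal_gen (LMset (@kerP K)) h -> ideal_gen (LMset basisF) h.
Proof.
apply: ideal_gen_sub => _ q [f [a [Pf [_ [LMa ->]]]]].
have [g Fg [e ->]] := cubic_mons_dvd (LM_ker_cubic Pf LMa).
apply: (ideal_gen_eq (psmul_monomialD g e q)).
exact: ideal_gen_generator (LMset_basisF Fg).
Qed.

End Characteristic.
End StandardBasis.

Theorem mainTheorem10 (K : fieldType) :
  ([pchar K] =i pred0 \/ exists p : nat, p \in [pchar K] /\ (5 <= p)%N) ->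
  standard_basis
    (fun g : ps K => g = f1 K \/ g = f2 K \/ g = f3 K \/ g = f4 K)
    (@kerP K).
Proof.
move=> charK.
have nz2 : (2%:R : K) != 0 by apply: natr_small_prime_neq0.
have nz3 : (3%:R : K) != 0 by apply: natr_small_prime_neq0.
split=> [g | h]; first exact: kerP_basisF.
split; first by apply: ideal_gen_mono; apply: LMset_mono => g; apply: kerP_basisF.
exact: ideal_LM_ker_sub.
Qed.
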